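(* Let $G'$ be a context-free grammar with start symbol $s$, no $\varepsilon$-rules and no useless nonterminal, let $\ell$ be a prefix of $G'$, and let $\mathrm{Expl}(G_\ell)$ be its explanation graph (defined in the context). Then for every defined goal $H$ with defining formula $H\Leftrightarrow\alpha_1\vee\dots\vee\alpha_M$ and every $i$, no two distinct occurrences of defined goals in the conjunction $\alpha_i$ belong to the same SCC.
   Context: Grammar: $G'$ has finite terminal set $\Sigma$, finite nonterminal set $N$, start symbol $s\in N$; every rule $A\to\alpha$ has $\alpha\in(N\cup\Sigma)^+$; no nonterminal is useless (each has a rule occurring in some derivation of a terminal string from $s$). A prefix is a nonempty string $\ell\in\Sigma^+$ that is an initial segment of some terminal string derivable from $s$. Explanation graph. For a prefix $\ell$ consider ground atoms $q(\ell)$, $p(\beta,u,v)$ with $\beta\in(N\cup\Sigma)^*$, $u,v\in\Sigma^*$, and switch atoms $m(A\to\alpha)$ for rules of $G'$. Consider all ground clauses: (C0) $q(\ell)\leftarrow p(s,\ell,\varepsilon)$; (C1) $p(\varepsilon,u,u)\leftarrow$ (empty body), for all $u$; (C2) for $a\in\Sigma$: $p(a\beta,a,\varepsilon)\leftarrow$ (empty body); and $p(a\beta,av,w)\leftarrow p(\beta,v,w)$ whenever $v\neq\varepsilon$; (C3) for $A\in N$ and each rule $A\to\alpha$: $p(A\beta,u,\varepsilon)\leftarrow m(A\to\alpha)\wedge p(\alpha,u,\varepsilon)$; and $p(A\beta,u,w)\leftarrow m(A\to\alpha)\wedge p(\alpha,u,v)\wedge p(\beta,v,w)$ whenever $v\neq\varepsilon$.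 A $p$- or $q$-atom is provable if it lies in the least Herbrand model of these clauses with all $m$-atoms taken as true. The defined goals of $\mathrm{Expl}(G_\ell)$ form the smallest set containing $q(\ell)$ such that whenever $H$ is a defined goal and $H\leftarrow\alpha$ is one of the clauses above whose $p$-atoms are all provable, every $p$-atom of $\alpha$ is a defined goal. The defining formula of a defined goal $H$ is $H\Leftrightarrow\alpha_1\vee\dots\vee\alpha_M$, where the $\alpha_i$ are the bodies of all such clauses with head $H$ whose $p$-atoms are all provable. $H$ is a parent of $C$ if $C$ occurs in some $\alpha_i$; the ancestor relation is the transitive closure of the parent relation. Two defined goals $A,B$ are equivalent if $A=B$ or each is an ancestor of the other; the equivalence classes are called SCCs (strongly connected components). *)

From Stdlib Require Import List Relations.
From mathcomp Require Import all_boot.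

Set Implicit Arguments.
Unset Strict Implicit.
Unset Printing Implicit Defensive.

Notation gsym Sigma NT := (sum Sigma NT).

Record cfg (Sigma NT : finType) := CFG {
  start : NT;
  rules : seq (NT * seq (gsym Sigma NT))
}.

Section Grammar.
Variables (Sigma NT : finType) (g : cfg Sigma NT).

Definition step (x y : seq (gsym Sigma NT)) : Prop :=
  exists u v A alpha, (A, alpha) \in rules g /\
    x = u ++ inr A :: v /\ y = u ++ alpha ++ v.

Inductive derives : seq (gsym Sigma NT) -> seq (gsym Sigma NT) -> Prop :=
| derives_refl x : derives x x
| derives_step x y z : step x y -> derives y z -> derives x z.

Definition terminal_word (w : seq Sigma) : seq (gsym Sigma NT) := map inl w.

Definition no_eps_rules : Prop :=
  forall r, r \in rules g -> r.2 <> [::].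

Definition useful (A : NT) : Prop :=
  exists alpha u v (w : seq Sigma), (A, alpha) \in rules g /\
    derives [:: inr (start g)] (u ++ inr A :: v) /\
    derives (u ++ alpha ++ v) (terminal_word w).

Definition no_useless : Prop := forall A : NT, useful A.

Definition is_prefix (l : seq Sigma) : Prop :=
  l <> [::] /\ exists w r : seq Sigma,
    derives [:: inr (start g)] (terminal_word w) /\ w = l ++ r.

Inductive atom : Type :=
| Q of seq Sigma
| P of seq (gsym Sigma NT) & seq Sigma & seq Sigma
| M of NT & seq (gsym Sigma NT).

Definition isP (a : atom) : bool := if a is P _ _ _ then true else false.

Variable l : seq Sigma.

Inductive clause : atom -> seq atom -> Prop :=
| C0 : clause (Q l) [:: P [:: inr (start g)] l [::]]
| C1 u : clause (P [::] u u) [::]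
| C2a a beta : clause (P (inl a :: beta) [:: a] [::]) [::]
| C2b a beta v w : v <> [::] ->
    clause (P (inl a :: beta) (a :: v) w) [:: P beta v w]
| C3a A alpha beta u : (A, alpha) \in rules g ->
    clause (P (inr A :: beta) u [::]) [:: M A alpha; P alpha u [::]]
| C3b A alpha beta u v w : (A, alpha) \in rules g -> v <> [::] ->
    clause (P (inr A :: beta) u w) [:: M A alpha; P alpha u v; P beta v w].

(* least Herbrand model, all m-atoms taken as true *)
Inductive provable : atom -> Prop :=
| prov H body : clause H body ->
    (forall a, In a body -> isP a -> provable a) -> provable H.

Definition body_ok (body : seq atom) : Prop :=
  forall a, In a body -> isP a -> provable a.

Inductive defined : atom -> Prop :=
| def_root : defined (Q l)
| def_step H body a : defined H -> clause H body -> body_ok body ->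
    In a body -> isP a -> defined a.

Definition disjunct (H : atom) (body : seq atom) : Prop :=
  defined H /\ clause H body /\ body_ok body.

Definition parent (H C : atom) : Prop :=
  exists body, disjunct H body /\ In C body /\ defined C.

Definition ancestor : atom -> atom -> Prop := clos_trans atom parent.

Definition same_scc (A B : atom) : Prop :=
  A = B \/ (ancestor A B /\ ancestor B A).

End Grammar.

(** The decisive quantity is the length of the input that a p-atom still has
    to parse.  Without epsilon-rules every provable atom [p(beta, u, w)]
    consumes input, [|w| <= |u|], strictly so when [beta] is nonempty; hence
    the input length never increases from a goal to the goals of its defining
    formula, and is therefore constant on an SCC.  The only conjunction with
    two goals comes from (C3): [p(alpha, u, v) /\ p(beta, v, w)] with [alpha]
    nonempty, so [|v| < |u|] and the two goals lie in different SCCs. *)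
From Stdlib Require Import List Relations.
From mathcomp Require Import all_boot.

Set Implicit Arguments.
Unset Strict Implicit.
Unset Printing Implicit Defensive.

Section ExplanationGraph.
Variables (Sigma NT : finType) (g : cfg Sigma NT) (l : seq Sigma).
Hypothesis noeps : no_eps_rules g.

Definition input_size (a : atom Sigma NT) : nat :=
  match a with
  | Q x => size x
  | P _ u _ => size u
  | M _ _ => 0
  end.

Definition consumes_input (a : atom Sigma NT) : Prop :=
  match a with
  | P beta u w => size w <= size u /\ (beta <> [::] -> size w < size u)
  | _ => True
  end.

Lemma provable_consumes_input a : provable g l a -> consumes_input a.
Proof.
elim=> {}a body cl _ IH; case: cl IH => //=.
- move=> a0 beta v w _ IH.
  have [le_wv _] : consumes_input (P beta v w) by apply: IH; [left |].
  by split=> [|_]; apply: leq_trans le_wv _.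
- move=> A alpha beta u rule IH.
  have [_ lt_u] : consumes_input (P alpha u [::]) by apply: IH; [right; left |].
  by split=> // _; apply: lt_u; apply: noeps rule.
- move=> A alpha beta u v w rule _ IH.
  have [_ lt_vu] : consumes_input (P alpha u v) by apply: IH; [right; left |].
  have [le_wv _] : consumes_input (P beta v w)
    by apply: IH; [right; right; left |].
  have lt_wu := leq_ltn_trans le_wv (lt_vu (noeps rule)).
  by split=> [|_ //]; apply: ltnW.
Qed.

Lemma provable_P_size_lt alpha u v :
  provable g l (P alpha u v) -> alpha <> [::] -> size v < size u.
Proof. by move=> /provable_consumes_input[]. Qed.

Lemma parent_input_size_le H C :
  parent g l H C -> input_size C <= input_size H.
Proof.
case=> body [[_ [cl ok]] [inC _]].
case: cl ok inC => /=.
- by move=> _ [<- | []].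
- by move=> _ _ [].
- by move=> _ _ _ [].
- by move=> a beta v w _ _ [<- | []] //=; apply: leqnSn.
- by move=> A alpha beta u _ _ [<- | [<- | []]].
- move=> A alpha beta u v w rule _ ok [<- | [<- | [<- | []]]] //=.
  apply: ltnW; apply: provable_P_size_lt (noeps rule).
  exact: ok _ (or_intror (or_introl erefl)) erefl.
Qed.

Lemma ancestor_input_size_le H C :
  ancestor g l H C -> input_size C <= input_size H.
Proof.
elim=> [x y /parent_input_size_le // | x y z _ le_yx _ le_zy].
exact: leq_trans le_zy le_yx.
Qed.

Lemma same_scc_input_size a b :
  same_scc g l a b -> input_size a = input_size b.
Proof.
case=> [-> // | [ab ba]]; apply/eqP.
by rewrite eqn_leq !ancestor_input_size_le.
Qed.

Lemma defined_isP_in_body H body a :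
  clause g l H body -> In a body -> defined g l a -> isP a.
Proof.
have notM A alpha : ~ defined g l (M A alpha) by move=> D; inversion D.
case=> [|u|a0 beta|a0 beta v w _|A alpha beta u _|A alpha beta u v w _ _] /=;
  by repeat (case=> [<- | ]; first by [] || move/notM).
Qed.

Lemma clause_distinct_P_input_size H body i j a b :
  clause g l H body -> body_ok g l body -> i <> j ->
  nth_error body i = Some a -> nth_error body j = Some b -> isP a -> isP b ->
  input_size a <> input_size b.
Proof.
case=> [|u|a0 beta|a0 beta v w _|A alpha beta u _|A alpha beta u v w rule _] ok;
  last have lt_vu : size v < size u := provable_P_size_lt
    (ok _ (or_intror (or_introl erefl)) erefl) (noeps rule).
all: case: i => [|[|[|i]]]; case: j => [|[|[|j]]] ij //=.
all: rewrite ?nth_error_nil;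
  try by [case: i {ij} | case: j {ij} | move=> [<-] [<-]].
all: by move=> [<-] [<-] _ _ /=; apply/eqP; rewrite neq_ltn lt_vu ?orbT.
Qed.
End ExplanationGraph.

Theorem lemma3 (Sigma NT : finType) (g : cfg Sigma NT) (l : seq Sigma) :
  no_eps_rules g -> no_useless g -> is_prefix g l ->
  forall (H : atom Sigma NT) (body : seq (atom Sigma NT)),
    disjunct g l H body ->
    forall (i j : nat) (a b : atom Sigma NT),
      i <> j -> nth_error body i = Some a -> nth_error body j = Some b ->
      defined g l a -> defined g l b -> ~ same_scc g l a b.
Proof.
move=> noeps _ _ H body [_ [cl ok]] i j a b ij ai bj Da Db scc_ab.
apply: (clause_distinct_P_input_size noeps cl ok ij ai bj _ _
  (same_scc_input_size noeps scc_ab)).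
- exact: defined_isP_in_body cl (nth_error_In _ _ ai) Da.
- exact: defined_isP_in_body cl (nth_error_In _ _ bj) Db.
Qed.
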